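(* Let $X$ be a uniform space equipped with a uniformly continuous and expansive action of a group $\Gamma$, and let $f \colon X \to X$ be a uniformly continuous and $\Gamma$-equivariant map. Let $Y$ be a subset of $X$ such that $Y$ and $f(Y)$ are both closed in $X$ and the restriction of $f$ to $Y$ is a uniform embedding. Suppose that there exists a net $(Z_i)_{i \in I}$ of $\Gamma$-invariant subsets of $X$ such that, for all $i \in I$, $f(Z_i) \subset Z_i$ and the restriction map $f\vert_{Z_i} \colon Z_i \to Z_i$ is surjunctive, and such that $(Z_i)$ converges to $Y$ in the Hausdorff-Bourbaki topology. Then $Y$ is $\Gamma$-invariant and $f(Y) = Y$.
   Context: A map $g \colon S \to S$ is surjunctive if it is surjective or not injective. For $V \subset X \times X$ and $A \subset X$, $V[A] = \{x \in X : (x,a) \in V \text{ for some } a \in A\}$. An action of $\Gamma$ on $X$ is uniformly continuous if each map $x \mapsto \gamma x$ is uniformly continuous; it is expansive if there is an entourage $W_0$ of $X$ such that for any two distinct $x,y \in X$ there is $\gamma \in \Gamma$ with $(\gamma x,\gamma y) \notin W_0$. A uniform embedding is an injective map inducing a uniform isomorphism onto its image. The Hausdorff-Bourbaki uniform structure on the set $\mathcal{P}(X)$ of all subsets of $X$ has as a base the sets $\widehat{V} = \{(A,B) : B \subset V[A] \text{ and } A \subset V[B]\}$, $V$ an entourage of $X$; the Hausdorff-Bourbaki topology is its associated topology. *)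

From HB Require Import structures.
From mathcomp Require Import all_boot all_order all_algebra.
From mathcomp Require Import all_classical all_reals all_analysis.
Set Implicit Arguments. Unset Strict Implicit. Unset Printing Implicit Defensive.
Local Open Scope classical_set_scope.

Definition is_group (G : Type) (mul : G -> G -> G) (one : G) (inv : G -> G) :=
  [/\ forall a b c, mul a (mul b c) = mul (mul a b) c,
      forall a, mul one a = a, forall a, mul a one = a,
      forall a, mul (inv a) a = one & forall a, mul a (inv a) = one].

Definition is_action (G X : Type) (mul : G -> G -> G) (one : G) (act : G -> X -> X) :=
  (forall x, act one x = x) /\ (forall g h x, act (mul g h) x = act g (act h x)).

Definition unif_continuous_action (G : Type) (X : uniformType) (act : G -> X -> X) :=
  forall g, unif_continuous (act g).

Definition expansive_action (G : Type) (X : uniformType) (act : G -> X -> X) :=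
  exists2 W0 : set (X * X), entourage W0 &
    forall x y : X, x <> y -> exists g : G, ~ W0 (act g x, act g y).

Definition ent_img (X : Type) (V : set (X * X)) (A : set X) : set X :=
  [set x | exists2 a, A a & V (x, a)].

Definition hb_ent (X : Type) (V : set (X * X)) (A B : set X) : Prop :=
  B `<=` ent_img V A /\ A `<=` ent_img V B.

Definition directed (I : Type) (le : I -> I -> Prop) :=
  [/\ (exists i : I, True), (forall i, le i i),
      (forall i j k, le i j -> le j k -> le i k) &
      (forall i j, exists k, le i k /\ le j k)].

(* Convergence of a net of subsets (Z_i) to Y in the Hausdorff-Bourbaki topology:
   for every entourage V of X (the sets hat V form a base of the HB uniformity),
   eventually (Z_i, Y) ∈ hat V. *)
Definition hb_converges (X : uniformType) (I : Type) (le : I -> I -> Prop)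
    (Z : I -> set X) (Y : set X) :=
  forall V : set (X * X), entourage V ->
    exists i0 : I, forall i, le i0 i -> hb_ent V (Z i) Y.

Definition gamma_invariant (G X : Type) (act : G -> X -> X) (A : set X) :=
  forall g x, A x -> A (act g x).

Definition uniform_embedding_on (X : uniformType) (f : X -> X) (Y : set X) :=
  [/\ (forall y y', Y y -> Y y' -> f y = f y' -> y = y'),
      (forall U, entourage U -> exists2 V, entourage V &
         forall y y', Y y -> Y y' -> V (y, y') -> U (f y, f y')) &
      (forall U, entourage U -> exists2 V, entourage V &
         forall y y', Y y -> Y y' -> V (f y, f y') -> U (y, y'))].

Definition surjunctive_on (X : Type) (f : X -> X) (Z : set X) :=
  Z `<=` f @` Z \/ ~ (forall z z', Z z -> Z z' -> f z = f z' -> z = z').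

From HB Require Import structures.
From mathcomp Require Import all_boot all_order all_algebra.
From mathcomp Require Import all_classical all_reals all_analysis.
Set Implicit Arguments. Unset Strict Implicit. Unset Printing Implicit Defensive.
Local Open Scope classical_set_scope.

(* Every uniformly continuous map commuting with the action and preserving the
   Z_i (the action maps, and f) preserves their Hausdorff-Bourbaki limit Y,
   because Y is closed; in particular f(Y) is contained in Y.  For the converse,
   expansiveness together with f being a uniform embedding on Y forces f to be
   injective on every Gamma-invariant set close enough to Y, so f is surjective
   on such a Z_i by surjunctivity; every point of Y is then close to f(Y), which
   is closed. *)

Lemma unif_continuous_entourage (X : uniformType) (f : X -> X) (U : set (X * X)) :
  unif_continuous f -> entourage U ->
  exists2 V, entourage V & forall a b, V (a, b) -> U (f a, f b).
Proof. by move=> hf eU; exists ((fun xy => (f xy.1, f xy.2)) @^-1` U); [exact: hf|]. Qed.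

Lemma entourage_sym_split (X : uniformType) (A : set (X * X)) : entourage A ->
  exists2 B, entourage B & (forall x y, B (x, y) -> B (y, x)) /\
    (forall x y z, B (x, y) -> B (y, z) -> A (x, z)).
Proof.
move=> eA; exists (split_ent A `&` (split_ent A)^-1%relation).
  exact/entourage_invI/entourage_split_ent.
split; first by move=> x y [].
by move=> x y z [Bxy _] [Byz _]; apply: (entourage_split y).
Qed.

Lemma closed_entourage_approx (X : uniformType) (A : set X) x : closed A ->
  (forall U, entourage U -> exists2 a, A a & U (x, a)) -> A x.
Proof.
move=> cA hA; apply: cA => B /nbhsP; rewrite nbhs_E => -[E eE sE].
by have [a Aa Ea] := hA E eE; exists a; split => //; apply/sE/xsectionP.
Qed.

Lemma hb_entS (X : Type) (V W : set (X * X)) (A B : set X) :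
  V `<=` W -> hb_ent V A B -> hb_ent W A B.
Proof.
move=> VW [BA AB]; split=> x.
  by move=> /BA [a Aa Vxa]; exists a => //; apply: VW.
by move=> /AB [a Aa Vxa]; exists a => //; apply: VW.
Qed.

Lemma hb_converges_approx (X : uniformType) (I : Type) (le : I -> I -> Prop)
    (Z : I -> set X) (Y : set X) :
  directed le -> hb_converges le Z Y ->
  forall V, entourage V -> exists i, hb_ent V (Z i) Y.
Proof. by move=> [_ le_refl _ _] hb V /hb [i0 hi0]; exists i0; apply/hi0/le_refl. Qed.

Lemma hb_limit_stable (X : uniformType) (I : Type) (Z : I -> set X) (Y : set X)
    (h : X -> X) :
  closed Y -> (forall V, entourage V -> exists i, hb_ent V (Z i) Y) ->
  unif_continuous h -> (forall i, Z i `<=` h @^-1` Z i) -> Y `<=` h @^-1` Y.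
Proof.
move=> Y_closed Z_approx hh hZ y Yy; apply: (@closed_entourage_approx _ Y (h y) Y_closed) => U eU.
have [U1 eU1 [_ U1U]] := entourage_sym_split eU.
have [V1 eV1 V1U1] := unif_continuous_entourage hh eU1.
have [i [YZ ZY]] := Z_approx _ (filterI eV1 eU1).
have [z Zz [V1yz _]] := YZ y Yy.
have [y' Yy' [_ U1zy']] := ZY (h z) (hZ _ _ Zz).
by exists y' => //; apply: (U1U _ (h z)) => //; apply: V1U1.
Qed.

Lemma surjective_near_image (X : uniformType) (f : X -> X) (Y : set X) (U : set (X * X)) :
  unif_continuous f -> entourage U ->
  exists2 V, entourage V & forall Z, hb_ent V Z Y -> Z `<=` f @` Z ->
    forall y, Y y -> exists2 y', Y y' & U (y, f y').
Proof.
move=> hf eU; have [U1 eU1 [_ U1U]] := entourage_sym_split eU.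
have [V1 eV1 V1U1] := unif_continuous_entourage hf eU1.
exists (V1 `&` U1); first exact: filterI.
move=> Z [YZ ZY] Zf y Yy; have [z Zz [_ U1yz]] := YZ y Yy.
have [z' Zz' fz'z] := Zf z Zz; have [y' Yy' [V1z'y' _]] := ZY z' Zz'.
by exists y' => //; apply: (U1U _ z) => //; rewrite -fz'z; apply: V1U1.
Qed.

(* If f z = f z', then for every g the points g z, g z' are close to points of Y
   with close f-images, hence W0-close by the uniform embedding; expansiveness
   then forces z = z'. *)
Lemma injective_near_embedding (X : uniformType) (G : Type) (act : G -> X -> X)
    (f : X -> X) (Y : set X) :
  expansive_action act -> unif_continuous f ->
  (forall g x, f (act g x) = act g (f x)) -> uniform_embedding_on f Y ->
  exists2 V, entourage V & forall Z, gamma_invariant act Z -> Z `<=` ent_img V Y ->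
    forall z z', Z z -> Z z' -> f z = f z' -> z = z'.
Proof.
move=> [W0 eW0 expW0] hf f_equiv [_ _ f_inv_uc].
have [W1 eW1 [_ W1W0]] := entourage_sym_split eW0.
have [W2 eW2 [W2sym W2W1]] := entourage_sym_split eW1.
have [V1 eV1 V1W2] := f_inv_uc _ eW2.
have [V2 eV2 [V2sym V2V1]] := entourage_sym_split eV1.
have [V3 eV3 V3V2] := unif_continuous_entourage hf eV2.
exists (V3 `&` W2); first exact: filterI.
move=> Z Zinv ZY z z' Zz Zz' fzz'; apply: contrapT => /expW0 [g]; apply.
have [y Yy [V3y W2y]] := ZY _ (Zinv g _ Zz).
have [y' Yy' [V3y' W2y']] := ZY _ (Zinv g _ Zz').
have f_gzz' : f (act g z) = f (act g z') by rewrite !f_equiv fzz'.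
have W2yy' : W2 (y, y').
  apply: V1W2 => //; apply: (V2V1 _ (f (act g z))); first exact/V2sym/V3V2.
  by rewrite f_gzz'; apply: V3V2.
apply: (W1W0 _ y'); first exact: (W2W1 _ y).
by apply: (W2W1 _ (act g z')); [apply: W2sym | apply: entourage_refl].
Qed.

Theorem corollary4p2 (X : uniformType) (G : Type)
  (mul : G -> G -> G) (one : G) (inv : G -> G) (act : G -> X -> X)
  (f : X -> X) (Y : set X) (I : Type) (le : I -> I -> Prop) (Z : I -> set X) :
  is_group mul one inv ->
  is_action mul one act ->
  unif_continuous_action act ->
  expansive_action act ->
  unif_continuous f ->
  (forall g x, f (act g x) = act g (f x)) ->
  closed Y -> closed (f @` Y) ->
  uniform_embedding_on f Y ->
  directed le ->
  (forall i, gamma_invariant act (Z i)) ->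
  (forall i, f @` Z i `<=` Z i) ->
  (forall i, surjunctive_on f (Z i)) ->
  hb_converges le Z Y ->
  gamma_invariant act Y /\ f @` Y = Y.
Proof.
move=> _ _ act_uc expansive f_uc f_equiv cY cfY f_emb dir Zinv fZ Zsurj hb.
have Z_approx := hb_converges_approx dir hb.
split.
  move=> g x Yx; apply: (hb_limit_stable cY Z_approx (act_uc g) _ Yx).
  by move=> i z; apply: Zinv.
apply/seteqP; split.
  move=> _ [y Yy <-]; apply: (hb_limit_stable cY Z_approx f_uc _ Yy).
  by move=> i x Zx; apply: fZ; exists x.
have [Vi eVi Vi_inj] := injective_near_embedding expansive f_uc f_equiv f_emb.
move=> y Yy; apply: (@closed_entourage_approx _ (f @` Y) y cfY) => U eU.
have [Vs eVs Vs_surj] := surjective_near_image Y f_uc eU.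
have [i Zi_close] := Z_approx _ (filterI eVi eVs).
have [_ Zi_Y] := hb_entS (@subIsetl _ Vi Vs) Zi_close.
have Zi_surj : Z i `<=` f @` Z i.
  by case: (Zsurj i) => // -[]; apply: (Vi_inj _ (Zinv i)).
have [y' Yy' Uyy'] := Vs_surj (Z i) (hb_entS (@subIsetr _ Vi Vs) Zi_close) Zi_surj y Yy.
by exists (f y') => //; exists y'.
Qed.
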